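(* Consider the structured private pooled-sequencing scheme with constant coverage depth described in the context, with $M\in\mathbb{N}$ unknown individuals, $M$ known individuals, base coverage $\alpha_0\in\mathbb{N}$, and per-read error probability $\eta\in(0,1/2)$. Let $\epsilon\in(0,1)$. If $$\frac{\alpha_0}{2^{M+1}-2}\geq\frac{8\eta(1-\eta)}{(1-2\eta)^2}\ln\left(\frac{1}{\epsilon}\right),$$ then the data collector can produce an estimate $\hat{\mathbf{X}}=\phi(\mathbf{Y},\mathcal{R})$ satisfying the reconstruction condition $\mathbb{P}(\hat{\mathbf{x}}_n\neq \mathbf{x}_n)\le\epsilon$ for every SNP position $n\in[N]$.
   Context: Setting. Each genome is described by $N$ SNP positions, each taking a binary value (0 = minor allele, 1 = major allele). There are $M$ ''unknown'' individuals indexed $m\in\{0,\dots,M-1\}$ whose SNPs form the matrix $\mathbf{X}\in\{0,1\}^{M\times N}$ with entries $X_{m,n}$ (unknown to everyone), and $K=M$ ''known'' individuals indexed $k\in\{0,\dots,M-1\}$ whose SNPs form $\mathbf{Y}\in\{0,1\}^{M\times N}$ with entries $Y_{k,n}$; $\mathbf{Y}$ is known to a trusted data collector but not to the sequencer, and its entries are i.i.d. uniform on $\{0,1\}$, independent of $\mathbf{X}$. Each genome is sheared into fragments; every fragment contains at most one SNP and can be mapped unambiguously to its SNP position. The data collector pools all fragments (without any label identifying the individual) and sends them to a sequencer, which reads each fragment and returns the set of reads $\mathcal{R}$; each read of a SNP is flipped ($0\leftrightarrow 1$) independently with probability $\eta$. In the structured scheme with constant coverage depth, for every SNP position $n$ the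 number of fragments covering position $n$ is exactly $2^m\alpha_0$ for unknown individual $m$ and exactly $2^k\alpha_0$ for known individual $k$, where $\alpha_0\in\mathbb{N}$. Thus for each position $n$ the reads reveal only the total count $\sum_{m}\sum_{i=1}^{2^m\alpha_0}(\tilde X_{m,n,i}+\tilde Y_{m,n,i})$ of read 1's, where $\tilde X_{m,n,i},\tilde Y_{m,n,i}$ are the noisy reads. As in the paper, the aggregated read noise is modeled via its central-limit (Gaussian) approximation: after normalization, the data collector observes $G_n=\sum_{m=0}^{M-1}2^mX_{m,n}+Z_n$ with $Z_n\sim\mathcal{N}(0,\sigma^2)$, $\sigma^2=\frac{2^{M+1}-2}{\alpha_0}\frac{\eta(1-\eta)}{(1-2\eta)^2}$. $\mathbf{x}_n$ and $\hat{\mathbf{x}}_n$ denote the $n$-th columns of $\mathbf{X}$ and $\hat{\mathbf{X}}$. *)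

From HB Require Import structures.
From mathcomp Require Import all_boot all_order all_algebra.
From mathcomp Require Import all_classical all_reals all_analysis.
Set Implicit Arguments. Unset Strict Implicit. Unset Printing Implicit Defensive.
Import Order.TTheory GRing.Theory Num.Theory.
Local Open Scope ring_scope.

(* Noise variance sigma^2 = (2^(M+1)-2)/alpha0 * eta(1-eta)/(1-2eta)^2 of the
   Gaussian (CLT) model of the aggregated read noise. *)
Definition noise_var {R : realType} (M alpha0 : nat) (eta : R) : R :=
  ((2 ^ M.+1 - 2)%:R / alpha0%:R) * (eta * (1 - eta) / (1 - 2 * eta) ^+ 2).

(* Noise-free normalized observation at SNP position n:
   sum_m 2^m X_{m,n}. *)
Definition pooled_mean {R : realType} (M N : nat) (X : 'M[bool]_(M, N))
  (n : 'I_N) : R :=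
  \sum_(m < M) (2 ^ m)%:R * (X m n)%:R.

Definition column (M N : nat) (X : 'M[bool]_(M, N)) (n : 'I_N)
  : {ffun 'I_M -> bool} := [ffun m => X m n].

(** The noise-free observation [sum_m 2^m X_{m,n}] is the integer whose binary
    digits are the column [x_n], so rounding the noisy observation to the
    nearest integer and reading off its binary digits recovers [x_n] unless
    [|Z_n| >= 1/2].  A Gaussian tail bound, obtained by shifting the density,
    gives [P(|Z_n| >= 1/2) <= exp (-1 / (8 sigma^2))], and the hypothesis on
    [alpha0] is exactly [8 sigma^2 ln (1/eps) <= 1]. *)

From mathcomp Require Import all_boot all_order all_algebra.
From mathcomp Require Import all_classical all_reals all_analysis.
From mathcomp Require Import measurable_realfun.
From mathcomp Require Import ring lra.

Set Implicit Arguments.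
Unset Strict Implicit.
Unset Printing Implicit Defensive.
Import Order.TTheory GRing.Theory Num.Theory.
Import numFieldNormedType.Exports.
Local Open Scope classical_set_scope.
Local Open Scope ring_scope.

Lemma ge0_integral_itvy_shift (R : realType) (g : R -> R) (a t : R) :
  continuous g -> (forall x, 0 <= g x) ->
  (\int[lebesgue_measure]_(x in `[a, +oo[) (g x)%:E =
   \int[lebesgue_measure]_(x in `[(a + t)%R, +oo[) (g (x - t)%R)%:E)%E.
Proof.
move=> g_cont g_ge0; rewrite -[X in `[X, +oo[](addrK t a).
have d_shift : (fun x : R => x - t)^`()%classic = cst 1.
  by apply/funext => x; rewrite derive1E deriveB// derive_id derive_cst subr0.
rewrite (increasing_ge0_integration_by_substitutiony (F := fun x => x - t)) ?d_shift.
- by apply: eq_integral => x _; rewrite /= mulr1.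
- by move=> x y _ _ xy; rewrite ltrD2r.
- by move=> x _; exact: cst_continuous.
- exact: is_cvg_cst.
- exact: is_cvg_cst.
- split; first by move=> x _; apply: derivableB.
  by apply: cvg_at_right_filter; apply: cvgB; [exact: cvg_id | exact: cvg_cst].
- exact: cvg_addrr.
- exact: continuous_subspaceT.
- by move=> x _.
Qed.

Section centered_normal_tail.
Variables (R : realType) (s : R).
Hypothesis s_gt0 : 0 < s.
Local Notation f := (normal_pdf (0 : R) s).
Local Notation P := (normal_prob (0 : R) s).

Let s_neq0 : s != 0. Proof. by rewrite gt_eqF. Qed.

Lemma normal_pdf0N x : f (- x) = f x.
Proof. by rewrite (normal_pdfE _ s_neq0) /normal_fun !subr0 sqrrN. Qed.

Lemma normal_pdf0_shift_le t x : 0 <= t <= x ->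
  f x <= expR (- t ^+ 2 / (s ^+ 2 *+ 2)) * f (x - t).
Proof.
move=> /andP[t_ge0 tx]; rewrite (normal_pdfE _ s_neq0) /normal_fun !subr0.
rewrite mulrCA ler_wpM2l ?normal_peak_ge0// -expRD ler_expR !mulNr.
have c_ge0 : 0 <= (s ^+ 2 *+ 2)^-1 by rewrite invr_ge0 mulrn_wge0 // sqr_ge0.
(* x^2 = t^2 + (x - t)^2 + 2 t (x - t) and the cross term is nonnegative *)
have cross_ge0 : 0 <= (s ^+ 2 *+ 2)^-1 * t * (x - t).
  by rewrite mulr_ge0 ?mulr_ge0 ?subr_ge0.
nra.
Qed.

Lemma normal_prob0_itvNy t : P `]-oo, - t] = P `[t, +oo[.
Proof.
rewrite /normal_prob ge0_integration_by_substitutionNy //.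
- by apply: eq_integral => x _ /=; rewrite normal_pdf0N.
- exact/continuous_subspaceT/continuous_normal_pdf.
- by move=> x _; exact: normal_pdf_ge0.
Qed.

Lemma normal_prob0_itvy_le t : 0 <= t ->
  (P `[t, +oo[ <= (expR (- t ^+ 2 / (s ^+ 2 *+ 2)))%:E * P `[0%R, +oo[)%E.
Proof.
move=> t_ge0; rewrite /normal_prob (@ge0_integral_itvy_shift _ f 0 t) ?add0r; last 2 first.
- exact: continuous_normal_pdf.
- exact: normal_pdf_ge0.
have mf_shift : measurable_fun setT (fun x : R => f (x - t)).
  by apply: measurableT_comp; [exact: measurable_normal_pdf | exact: measurable_funB].
rewrite -ge0_integralZl //; first last.
- by move=> x _; rewrite lee_fin normal_pdf_ge0.
- apply/measurable_EFinP; exact: measurable_funTS.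
apply: ge0_le_integral => //.
- by move=> x _; rewrite lee_fin normal_pdf_ge0.
- apply/measurable_EFinP; exact: measurable_funTS (measurable_normal_pdf _ _).
- apply/measurable_EFinP; apply: measurable_funM => //; exact: measurable_funTS.
- move=> x; rewrite /= in_itv /= andbT => tx.
  by rewrite lee_fin normal_pdf0_shift_le ?t_ge0.
Qed.

Lemma normal_prob0_itv0y_twice : (P `[0%R, +oo[ + P `[0%R, +oo[ = 1)%E.
Proof.
have P0 : P [set 0%R] = 0%E.
  apply: (@normal_prob_dominates R 0 s [set 0%R]) => //.
  by apply/measure0_null_setP => //; exact: lebesgue_measure_set1.
have PNy0 : P `]-oo, 0%R] = P `]-oo, 0%R[.
  rewrite -[RHS]adde0 -P0 -measureU //; last first.
    by apply/seteqP; split => x //= [] /[swap] ->; rewrite in_itv /= ltxx.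
  congr P; apply/seteqP; split => x /=; rewrite !in_itv /= ?andbT.
    by rewrite le_eqVlt => /orP[/eqP ->|]; [right|left].
  by case=> [/ltW|->].
rewrite -{1}(normal_prob0_itvNy 0) oppr0 PNy0 -measureU //; last first.
  apply/seteqP; split => x //= []; rewrite !in_itv /= ?andbT => x_lt0 x_ge0.
  by have := lt_le_trans x_lt0 x_ge0; rewrite ltxx.
rewrite (_ : _ `|` _ = setT); first exact: probability_setT.
apply/seteqP; split => x //= _; rewrite !in_itv /= ?andbT.
by case: (ltP x 0); [left|right].
Qed.

Lemma normal_prob0_tail_le t (A : set R) : 0 <= t -> measurable A ->
  A `<=` [set z | z < - t \/ t <= z] ->
  (P A <= (expR (- t ^+ 2 / (s ^+ 2 *+ 2)))%:E)%E.
Proof.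
move=> t_ge0 mA sA.
apply: (@le_trans _ _ (P (`]-oo, - t] `|` `[t, +oo[))).
  apply: le_measure; rewrite ?inE //; first exact: measurableU.
  by move=> x /sA[/ltW x_le|x_ge]; [left|right]; rewrite /= in_itv /= ?andbT.
apply: (le_trans (measureU2 _ _ _)) => //.
change (P `]-oo, (- t)%R] + P `[t, +oo[ <= (expR (- t ^+ 2 / (s ^+ 2 *+ 2)))%:E)%E.
rewrite normal_prob0_itvNy.
apply: le_trans; first exact: leeD (normal_prob0_itvy_le t_ge0) (normal_prob0_itvy_le t_ge0).
by rewrite -ge0_muleDr ?normal_prob0_itv0y_twice ?mule1 ?measure_ge0.
Qed.

End centered_normal_tail.

Definition bin_value (M : nat) (w : {ffun 'I_M -> bool}) : nat :=
  (\sum_(m < M) 2 ^ m * w m)%N.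

Lemma bin_value_recl M (w : {ffun 'I_M.+1 -> bool}) :
  bin_value w = (w ord0 + 2 * bin_value [ffun i => w (lift ord0 i)])%N.
Proof.
rewrite /bin_value big_ord_recl mul1n big_distrr /=; congr addn.
by apply: eq_bigr => i _; rewrite ffunE expnS mulnA.
Qed.

Lemma bin_value_inj M : injective (@bin_value M).
Proof.
elim: M => [|M IH] w1 w2; first by move=> _; apply/ffunP => -[].
rewrite !bin_value_recl => e12.
have e0 : w1 ord0 = w2 ord0.
  by move: (congr1 odd e12); rewrite !mul2n !oddD !odd_double !addbF !oddb.
move: e12; rewrite e0 => /addnI /eqP; rewrite eqn_pmul2l // => /eqP /IH /ffunP e.
apply/ffunP => i; case: (unliftP ord0 i) => [j ->|-> //].
by have := e j; rewrite !ffunE.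
Qed.

Lemma pooled_meanE (R : realType) M N (X : 'M[bool]_(M, N)) n :
  pooled_mean X n = (bin_value (column X n))%:R :> R.
Proof.
rewrite /pooled_mean /bin_value natr_sum.
by apply: eq_bigr => m _; rewrite ffunE natrM.
Qed.

Section rounding_decoder.
Variables (R : realType) (M : nat).

Definition bin_cell (w : {ffun 'I_M -> bool}) : interval R :=
  `[(bin_value w)%:R - 1 / 2, (bin_value w)%:R + 1 / 2[.

Definition round_decode (g : R) : {ffun 'I_M -> bool} :=
  odflt [ffun => false] [pick w | g \in bin_cell w].

Lemma round_decodeE w g : g \in bin_cell w -> round_decode g = w.
Proof.
move=> gw; rewrite /round_decode; case: pickP => [v gv|/(_ w)]; last by rewrite gw.
apply/bin_value_inj/eqP; move: gv gw; rewrite !in_itv /= => /andP[? ?] /andP[? ?].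
by rewrite eqn_leq; apply/andP; split; rewrite -ltnS -(ltr_nat R) -addn1 natrD; lra.
Qed.

Lemma round_decode_notin g :
  (forall w, g \notin bin_cell w) -> round_decode g = [ffun => false].
Proof. by move=> gN; rewrite /round_decode; case: pickP => // w; rewrite (negbTE (gN w)). Qed.

Lemma measurable_round_decode v : measurable (round_decode @^-1` [set v]).
Proof.
have decodeP g : round_decode g = v ->
    g \in bin_cell v \/ (forall w, g \notin bin_cell w) /\ v = [ffun => false].
  by rewrite /round_decode; case: pickP => [w gw|gN] <-; [left|right; split => // w; rewrite gN].
case: (eqVneq v [ffun => false]) => [v0|v_neq0].
- rewrite (_ : _ @^-1` _ = [set` bin_cell v] `|`
                          ~` \bigcup_(w in setT) [set` bin_cell w]).
    apply: measurableU; first exact: measurable_itv.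
    by apply/measurableC/fin_bigcup_measurable => // w _; exact: measurable_itv.
  apply/seteqP; split => g /=.
    by move=> /decodeP[|[gN _]]; [left | right => -[w _]; apply/negP/gN].
  case=> [/round_decodeE //|gN]; rewrite v0; apply: round_decode_notin => w.
  by apply/negP => gw; apply: gN; exists w.
- rewrite (_ : _ @^-1` _ = [set` bin_cell v]); first exact: measurable_itv.
  apply/seteqP; split => g /=; last exact: round_decodeE.
  by move=> /decodeP[// | [_ v0]]; rewrite v0 eqxx in v_neq0.
Qed.

Lemma measurable_round_decode_error (c : R) w :
  measurable [set z : R | round_decode (c + z) != w].
Proof.
rewrite (_ : [set z | _] = ~` ((+%R c) @^-1` (round_decode @^-1` [set w]))).
  apply: measurableC; rewrite -[X in measurable X]setTI.
  by apply: measurable_funD => //; exact: measurable_round_decode.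
by apply/seteqP; split => z /= /eqP.
Qed.

Lemma round_decode_error_far w z :
  round_decode ((bin_value w)%:R + z) != w -> z < - (1 / 2) \/ 1 / 2 <= z.
Proof.
move=> err; case: (ltP z (- (1 / 2))) => [|z_ge]; [by left | right].
rewrite leNgt; apply: contra err => z_lt.
by rewrite (@round_decodeE w) // in_itv /=; apply/andP; split; lra.
Qed.

End rounding_decoder.

Lemma noise_var_gt0_ln_le (R : realType) (M alpha0 : nat) (eta eps : R) :
  0 < eta < 1 / 2 -> 0 < eps < 1 ->
  8 * eta * (1 - eta) / (1 - 2 * eta) ^+ 2 * ln (1 / eps)
    <= alpha0%:R / (2 ^ M.+1 - 2)%:R ->
  0 < noise_var M alpha0 eta /\ 8 * noise_var M alpha0 eta * ln (1 / eps) <= 1.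
Proof.
move=> /andP[eta_gt0 eta_lt] /andP[eps_gt0 eps_lt1]; rewrite /noise_var.
set a : R := alpha0%:R; set K : R := (2 ^ M.+1 - 2)%:R.
set c := eta * (1 - eta) / (1 - 2 * eta) ^+ 2; set L := ln (1 / eps).
have -> : 8 * eta * (1 - eta) / (1 - 2 * eta) ^+ 2 = 8 * c by rewrite /c !mulrA.
move=> bound.
have c_gt0 : 0 < c by rewrite divr_gt0 ?mulr_gt0 ?exprn_gt0 //; lra.
have L_gt0 : 0 < L by rewrite ln_gt0 // div1r invf_gt1.
have aK_gt0 : 0 < a / K.
  by apply: lt_le_trans bound; rewrite mulr_gt0 // mulr_gt0.
have a_gt0 : 0 < a.
  by rewrite lt0r ler0n andbT; apply: contraTneq aK_gt0 => ->; rewrite mul0r ltxx.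
have K_gt0 : 0 < K.
  by rewrite lt0r ler0n andbT; apply: contraTneq aK_gt0 => ->; rewrite invr0 mulr0 ltxx.
split; first by apply: mulr_gt0 => //; apply: divr_gt0.
have -> : 8 * (K / a * c) * L = K / a * (8 * c * L) by ring.
by rewrite -ler_pdivlMl ?divr_gt0 // invf_div mulr1.
Qed.

Lemma expR_half_tail_le (R : realType) (v eps : R) : 0 < v -> 0 < eps ->
  8 * v * ln (1 / eps) <= 1 -> expR (- (1 / 2) ^+ 2 / (v *+ 2)) <= eps.
Proof.
move=> v_gt0 eps_gt0 bound.
rewrite -[leRHS]lnK ?posrE // ler_expR.
have -> : ln eps = - ln (1 / eps) by rewrite div1r lnV ?opprK ?posrE.
rewrite mulNr lerN2 ler_pdivlMr ?pmulrn_lgt0 //; lra.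
Qed.

Theorem theorem1 (R : realType) (M alpha0 : nat) (eta eps : R) :
  0 < eta < 1 / 2 ->
  0 < eps < 1 ->
  8 * eta * (1 - eta) / (1 - 2 * eta) ^+ 2 * ln (1 / eps)
    <= alpha0%:R / (2 ^ M.+1 - 2)%:R ->
  exists phi : R -> {ffun 'I_M -> bool},
    (forall v : {ffun 'I_M -> bool}, measurable (phi @^-1` [set v])) /\
    forall (N : nat) (X : 'M[bool]_(M, N)) (n : 'I_N),
      (normal_prob 0 (Num.sqrt (noise_var M alpha0 eta))
         [set z : R | phi (pooled_mean X n + z)%R != column X n] <= eps%:E)%E.
Proof.
move=> eta_bounds eps_bounds hyp.
have [var_gt0 var_bound] := noise_var_gt0_ln_le eta_bounds eps_bounds hyp.
have [eps_gt0 _] := andP eps_bounds.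
exists (@round_decode R M); split; first exact: measurable_round_decode.
move=> N X n; have s_gt0 : 0 < Num.sqrt (noise_var M alpha0 eta) by rewrite sqrtr_gt0.
apply: le_trans (normal_prob0_tail_le s_gt0 (t := 1 / 2) _ (measurable_round_decode_error _ _) _) _.
- by rewrite divr_ge0.
- by move=> z; rewrite /= pooled_meanE; exact: round_decode_error_far.
- by rewrite lee_fin sqr_sqrtr ?expR_half_tail_le // ltW.
Qed.
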